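(* Consider a well-formed execution $\beta$ of the md-value protocol described in the context in which the event $\text{md-value-send}(t,v)_p$ occurs (at writer $p$). Then there is a state $\sigma$ of $\beta$ occurring after the event $\text{md-value-send}(t,v)_p$ such that, for the sender automaton of $p$ and for the server automaton of every $s\in\mathcal{S}$, either (i) that automaton's variable $failed$ is $true$, or (ii) in every state of $\beta$ following $\sigma$, none of that automaton's state variables contains $v$ or any of the coded elements $\Phi_{s'}(v)$, $s'\in\mathcal{S}$.
   Context: System model: an asynchronous message-passing system with a set $\mathcal{W}$ of writers, a set $\mathcal{R}$ of readers and a set $\mathcal{S}$ of $n$ servers, ordered $s_1<\dots<s_n$. Every client–server pair and every server–server pair is joined by a reliable point-to-point channel (a message is eventually delivered if the destination does not crash, even if the sender crashes; no ordering assumption). Processes fail only by crashing; at most $f$ servers crash, $1\le f\le (n-1)/2$; any number of clients may crash. An execution is well-formed if each client starts a new operation only after its previous one completed. Coding: $[n,k]$ MDS code with encoder $\Phi$; $\Phi_s(v)$ is the coded element of value $v$ for server $s$. Tags lie in a totally ordered set $\mathcal{T}$. The md-value protocol as I/O automata. Sender automaton at writer $p$: state variables $failed$ (Boolean, initially false), $active$ (Boolean), $mCount$ (integer counter), a FIFO queue $send\_buff$ (initially empty), a message identifier $mID$, and $currTag$. On input $\text{md-value-send}(t,v)_p$ (if not failed): $mCount$ is incremented, $mID\gets(p,mCount)$, $send\_buff$ is set to the messages $((mID,(t,v),\text{''full''}),s)$ for $s\in\{s_1,\dots,s_{f+1}\}$ in server order, $active\gets true$, $currTag\gets t$. The output $\text{send}$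 action (enabled when not failed) removes the first element of $send\_buff$ and puts its message on the channel to its destination; when $send\_buff$ is empty and $active$ holds, output $\text{md-value-send-ack}(t)_p$ sets $active\gets false$, $currTag\gets\bot$. An internal $\text{fail}$ action sets $failed\gets true$, after which no further actions are taken. Server automaton at $s=s_i$: state variables $failed$ (initially false), a map $status$ from message identifiers to $\{\text{ready},\text{sending},\text{delivered}\}$ (initially undefined, $\bot$), a map $content$ from message identifiers to a (tag, coded element) pair or $\bot$, and per-identifier FIFO output queues $outQueue(mID)$. On receiving $(mID,(t,v),\text{''full''})$ (if not failed and $status(mID)=\bot$): append to $outQueue(mID)$ the messages $(mID,(t,v),\text{''full''})$ for $s_{i+1},\dots,s_{f+1}$ and $(mID,(t,\Phi_{s'}(v)),\text{''coded''})$ for every other server $s'$ outside $\{s_{1},\dots,s_{f+1}\}$; set $status(mID)\gets\text{sending}$ and $content(mID)\gets(t,\Phi_s(v))$. On receiving $(mID,(t,c),\text{''coded''})$ (if not failed and $status(mID)\neq\text{delivered}$): $status(mID)\gets\text{ready}$, $content(mID)\gets(t,c)$. The output $\text{send}$ action (if not failed) sends the first element of $outQueue(mID)$ and removes it; if the queue becomes empty, $status(mID)\gets\text{ready}$. The output $\text{md-value-deliver}(t,c)_s$ is enabled when not failed, $status(mID)=\text{ready}$ and $content(mID)=(t,c)$; it sets $status(mID)\gets\text{delivered}$ and $content(mID)\gets\bot$. An internal $\text{fail}$ action sets $failed\gets true$. The protocol is the composition of these automata with the reliable channel automata. *)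

From mathcomp Require Import all_boot all_order.

Section MdValue.

(* writers, number of servers n (servers are 'I_n, ordered by index:
   s_1 < ... < s_n is 0 < ... < n-1), crash bound f, tags, values,
   coded elements and the encoder Phi. *)
Variables (W : finType) (n f : nat) (T V C : Type) (Phi : 'I_n -> V -> C).

(* message identifiers (p, mCount) *)
Definition MID : Type := (W * nat)%type.

Inductive payload : Type :=
| Full of T & V
| Coded of T & C.

Definition msg : Type := (MID * payload)%type.

Inductive status : Type := Ready | Sending | Delivered.

(* sender automaton at a writer; [None] for mID / currTag is "bot" *)
Record wstate : Type := WState {
  w_failed : bool;
  w_active : bool;
  w_mCount : nat;
  w_buff : seq (msg * 'I_n);          (* send_buff: (message, destination) *)
  w_mID : option MID;
  w_currTag : option T }.

(* server automaton; [None] is "bot" / undefined *)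
Record sstate : Type := SState {
  s_failed : bool;
  s_status : MID -> option status;
  s_content : MID -> option (T * C);
  s_outq : MID -> seq (msg * 'I_n) }.  (* outQueue(mID): (message, destination) *)

Definition node : Type := (W + 'I_n)%type.

Record gstate : Type := GState {
  g_w : W -> wstate;
  g_s : 'I_n -> sstate;
  g_ch : node -> 'I_n -> seq msg }.   (* messages in transit (unordered bag) *)

Definition upd {A : eqType} {B : Type} (g : A -> B) (a : A) (b : B) : A -> B :=
  fun x => if x == a then b else g x.

Definition w_init : wstate := WState false false 0 [::] None None.
Definition s_init : sstate :=
  SState false (fun _ => None) (fun _ => None) (fun _ => [::]).
Definition g_init : gstate :=
  GState (fun _ => w_init) (fun _ => s_init) (fun _ _ => [::]).

(* the first f+1 servers s_1..s_{f+1} are those of (0-based) index <= f *)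
Definition full_server (s : 'I_n) : bool := (val s <= f)%N.

Definition w_on_send (p : W) (t : T) (v : V) (ws : wstate) : wstate :=
  if w_failed ws then ws else
  let id := (p, (w_mCount ws).+1) in
  WState false true (w_mCount ws).+1
    [seq ((id, Full t v), s) | s <- enum 'I_n & full_server s]
    (Some id) (Some t).

Definition s_on_recv (s : 'I_n) (m : msg) (ss : sstate) : sstate :=
  if s_failed ss then ss else
  let id := m.1 in
  match m.2 with
  | Full t v =>
      match s_status ss id with
      | None =>
          let out :=
            [seq ((id, Full t v), s') | s' <- enum 'I_n &
                                        (val s < val s')%N && full_server s'] ++
            [seq ((id, Coded t (Phi s' v)), s') | s' <- enum 'I_n &
                                        ~~ full_server s' && (s' != s)] in
          SState false (upd (s_status ss) id (Some Sending))
                 (upd (s_content ss) id (Some (t, Phi s v)))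
                 (upd (s_outq ss) id (s_outq ss id ++ out))
      | Some _ => ss
      end
  | Coded t c =>
      match s_status ss id with
      | Some Delivered => ss
      | _ => SState false (upd (s_status ss) id (Some Ready))
                   (upd (s_content ss) id (Some (t, c))) (s_outq ss)
      end
  end.

Inductive act : Type :=
| A_mdsend of W & T & V
| A_wsend of W
| A_ack of W & T
| A_wfail of W
| A_recv of node & 'I_n & msg
| A_ssend of 'I_n & MID
| A_deliver of 'I_n & MID & T & C
| A_sfail of 'I_n.

Definition set_w (g : gstate) (p : W) (ws : wstate) : gstate :=
  GState (upd (g_w g) p ws) (g_s g) (g_ch g).
Definition set_s (g : gstate) (s : 'I_n) (ss : sstate) : gstate :=
  GState (g_w g) (upd (g_s g) s ss) (g_ch g).
Definition set_ch (g : gstate) (src : node) (dst : 'I_n) (l : seq msg) : gstate :=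
  GState (g_w g) (g_s g)
    (fun a b => if (a == src) && (b == dst) then l else g_ch g a b).

Inductive step : gstate -> act -> gstate -> Prop :=
| st_mdsend g p t v :
    step g (A_mdsend p t v) (set_w g p (w_on_send p t v (g_w g p)))
| st_wsend g p m d rest :
    w_failed (g_w g p) = false ->
    w_buff (g_w g p) = (m, d) :: rest ->
    step g (A_wsend p)
      (set_ch (set_w g p (let ws := g_w g p in
                 WState (w_failed ws) (w_active ws) (w_mCount ws) rest
                        (w_mID ws) (w_currTag ws)))
              (inl p) d (rcons (g_ch g (inl p) d) m))
| st_ack g p t :
    w_failed (g_w g p) = false ->
    w_buff (g_w g p) = [::] ->
    w_active (g_w g p) = true ->
    w_currTag (g_w g p) = Some t ->
    step g (A_ack p t)
      (set_w g p (let ws := g_w g p in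
                  WState (w_failed ws) false (w_mCount ws) (w_buff ws)
                         (w_mID ws) None))
| st_wfail g p :
    step g (A_wfail p)
      (set_w g p (let ws := g_w g p in
                  WState true (w_active ws) (w_mCount ws) (w_buff ws)
                         (w_mID ws) (w_currTag ws)))
| st_recv g src dst m l1 l2 :
    g_ch g src dst = l1 ++ m :: l2 ->
    step g (A_recv src dst m)
      (set_s (set_ch g src dst (l1 ++ l2)) dst (s_on_recv dst m (g_s g dst)))
| st_ssend g s id m d rest :
    s_failed (g_s g s) = false ->
    s_outq (g_s g s) id = (m, d) :: rest ->
    step g (A_ssend s id)
      (set_ch (set_s g s (let ss := g_s g s in
                 SState (s_failed ss)
                   (if rest is [::] then upd (s_status ss) id (Some Ready)
                    else s_status ss)
                   (s_content ss) (upd (s_outq ss) id rest)))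
              (inr s) d (rcons (g_ch g (inr s) d) m))
| st_deliver g s id t c :
    s_failed (g_s g s) = false ->
    s_status (g_s g s) id = Some Ready ->
    s_content (g_s g s) id = Some (t, c) ->
    step g (A_deliver s id t c)
      (set_s g s (let ss := g_s g s in
                  SState (s_failed ss) (upd (s_status ss) id (Some Delivered))
                    (upd (s_content ss) id None) (s_outq ss)))
| st_sfail g s :
    step g (A_sfail s)
      (set_s g s (let ss := g_s g s in
                  SState true (s_status ss) (s_content ss) (s_outq ss))).

(* An execution: an infinite sequence of states, where step i is either an
   action of the composition or a stuttering (no-op) step, so that finite
   executions are represented by stuttering forever at the end. *)
Record execution : Type := Exec {
  ex_st : nat -> gstate;
  ex_act : nat -> option act }.

Definition is_execution (e : execution) : Prop :=
  ex_st e 0 = g_init /\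
  forall i, match ex_act e i with
            | None => ex_st e i.+1 = ex_st e i
            | Some a => step (ex_st e i) a (ex_st e i.+1)
            end.

Definition fair_task (e : execution) (en : gstate -> Prop)
    (occ : option act -> Prop) : Prop :=
  forall i, exists j, (i <= j)%N /\ (~ en (ex_st e j) \/ occ (ex_act e j)).

Definition fair (e : execution) : Prop :=
  (forall p, fair_task e
     (fun g => w_failed (g_w g p) = false /\ w_buff (g_w g p) <> [::])
     (fun a => a = Some (A_wsend p))) /\
  (forall p, fair_task e
     (fun g => w_failed (g_w g p) = false /\ w_buff (g_w g p) = [::] /\
               w_active (g_w g p) = true)
     (fun a => exists t, a = Some (A_ack p t))) /\
  (forall s id, fair_task e
     (fun g => s_failed (g_s g s) = false /\ s_outq (g_s g s) id <> [::])
     (fun a => a = Some (A_ssend s id))) /\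
  (forall s id, fair_task e
     (fun g => s_failed (g_s g s) = false /\
               s_status (g_s g s) id = Some Ready /\
               s_content (g_s g s) id <> None)
     (fun a => exists t c, a = Some (A_deliver s id t c))).

Definition reliable_channels (e : execution) : Prop :=
  forall i src dst m l1 l2, g_ch (ex_st e i) src dst = l1 ++ m :: l2 ->
    exists j, (i <= j)%N /\
      (ex_act e j = Some (A_recv src dst m) \/ s_failed (g_s (ex_st e j) dst)).

Definition crash_bound (e : execution) : Prop :=
  forall i, (#|[set s : 'I_n | s_failed (g_s (ex_st e i) s)]| <= f)%N.

Definition well_formed (e : execution) : Prop :=
  forall i j p t v t' v', (i < j)%N ->
    ex_act e i = Some (A_mdsend p t v) -> ex_act e j = Some (A_mdsend p t' v') ->
    exists k t'', (i < k < j)%N /\ ex_act e k = Some (A_ack p t'').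

(* membership in a seq, as a Prop (no decidable equality needed) *)
Fixpoint InS {A : Type} (x : A) (s : seq A) : Prop :=
  if s is y :: s' then y = x \/ InS x s' else False.

Definition coded_of (v : V) (c : C) : Prop := exists s', c = Phi s' v.

Definition payload_has (v : V) (pl : payload) : Prop :=
  match pl with
  | Full _ v' => v' = v
  | Coded _ c => coded_of v c
  end.

Definition w_holds (id : MID) (v : V) (ws : wstate) : Prop :=
  exists m d, InS (m, d) (w_buff ws) /\ m.1 = id /\ payload_has v m.2.

Definition s_holds (id : MID) (v : V) (ss : sstate) : Prop :=
  (exists t c, s_content ss id = Some (t, c) /\ coded_of v c) \/
  (exists m d, InS (m, d) (s_outq ss id) /\ m.1 = id /\ payload_has v m.2).

Definition mds (k : nat) : Prop :=
  (0 < k <= n)%N /\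
  forall (S : {set 'I_n}) (v w : V), #|S| = k ->
    (forall s, s \in S -> Phi s v = Phi s w) -> v = w.

End MdValue.

From mathcomp Require Import all_boot all_order zify.
From Stdlib Require Import Classical.

(* Let mid be the identifier of the write invoked at i0.  After i0 no live
   writer can issue mid again, so no new message carrying v or a coded element
   of v is ever created.  A natural-number potential weighs every copy of mid's
   data in send buffers, channels and out-queues, together with each server's
   status for mid; it never increases, and it strictly decreases with every
   action handling mid (a full message weighs exponentially more the earlier
   its destination in the server order, hence more than all the messages its
   reception creates).  So from some point on no action handles mid.  By weak
   fairness a live writer still buffering mid would then send, and a live
   server with a nonempty outQueue(mid) would send or with ready content would
   deliver; as a server's content for mid is always ready or backed by a
   nonempty queue, nothing about v remains. *)

Lemma nat_ind_from (P : nat -> Prop) i :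
  P i -> (forall l, i <= l -> P l -> P l.+1) -> forall l, i <= l -> P l.
Proof.
move=> Pi Pstep l /subnK <-; elim: (l - i) => [|k IH] //=.
by rewrite addSn; apply: Pstep IH; rewrite leq_addl.
Qed.

Lemma nonincreasing_eventually_constant (u : nat -> nat) i :
  (forall l, i <= l -> u l.+1 <= u l) ->
  exists2 J, i <= J & forall l, J <= l -> u l = u J.
Proof.
have [m Em] : exists m, u i = m by exists (u i).
elim/ltn_ind: m i Em => m IH i Em dec.
have below : forall l, i <= l -> u l <= u i.
  by apply: (nat_ind_from (fun l => u l <= u i)) => // k ik uk; exact: leq_trans (dec k ik) uk.
case: (classic (exists2 l, i <= l & u l < u i)) => [[l il ult]|stuck].
  rewrite Em in ult.
  have [J lJ HJ] := IH (u l) ult l erefl (fun k lk => dec k (leq_trans il lk)).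
  by exists J => //; exact: leq_trans il lJ.
exists i => // l il; apply/eqP; rewrite eqn_leq below //= leqNgt.
by apply/negP => ult; apply: stuck; exists l.
Qed.

Definition eventually (P : nat -> Prop) : Prop := exists t, forall j, t <= j -> P j.

Lemma eventually_gt i : eventually (fun j => i < j).
Proof. by exists i.+1. Qed.

Lemma eventually_and {P Q : nat -> Prop} :
  eventually P -> eventually Q -> eventually (fun j => P j /\ Q j).
Proof.
move=> [tP HP] [tQ HQ]; exists (maxn tP tQ) => j.
by rewrite geq_max => /andP [tPj tQj]; split; [apply: HP|apply: HQ].
Qed.

Lemma eventually_forall_fin {I : finType} {P : I -> nat -> Prop} :
  (forall x, eventually (P x)) -> eventually (fun j => forall x, P x j).
Proof.
move=> ev; suff [t Ht] : eventually (fun j => forall x, x \in enum I -> P x j).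
  by exists t => j tj x; apply: Ht; rewrite ?mem_enum.
elim: (enum I) => [|x s [t Ht]]; first by exists 0.
have [tx Htx] := ev x; exists (maxn tx t) => j; rewrite geq_max => /andP [txj tj] y.
by rewrite in_cons => /predU1P [->|ys]; [exact: Htx|exact: Ht].
Qed.

Lemma sumn_filter_le (A : Type) (h : A -> nat) (P : pred A) (s : seq A) c :
  (forall x, P x -> h x <= c) -> sumn (map h (filter P s)) <= size s * c.
Proof.
move=> hc; elim: s => //= x s IH; rewrite mulSn; case: ifP => Px /=; last lia.
by have := hc x Px; lia.
Qed.

Section InS.
Local Set Implicit Arguments.
Local Unset Strict Implicit.
Variable A : Type.
Implicit Types (x : A) (s : seq A).

Lemma InS_cat x s1 s2 : InS x (s1 ++ s2) <-> InS x s1 \/ InS x s2.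
Proof. by elim: s1 => [|y s1 IH] /=; [tauto|rewrite IH; tauto]. Qed.

Lemma InS_rcons x s y : InS x (rcons s y) <-> InS x s \/ y = x.
Proof. by rewrite -cats1 InS_cat /=; tauto. Qed.

Lemma InS_map_filter (B : Type) (F : B -> A) (P : pred B) (s : seq B) x :
  InS x [seq F z | z <- s & P z] -> exists2 z, P z & F z = x.
Proof.
elim: s => [|z s IH] //=; case: ifP => Pz /=; last exact: IH.
by case=> [<-|/IH //]; exists z.
Qed.

Lemma sumn_InS_eq0 (h : A -> nat) s :
  (forall x, InS x s -> h x = 0) -> sumn (map h s) = 0.
Proof.
elim: s => [|y s IH] //= h0.
by rewrite h0 ?IH //=; [move=> x xs; apply: h0; right|left].
Qed.

Lemma InS_hasP (p : pred A) s : reflect (exists2 x, InS x s & p x) (has p s).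
Proof.
elim: s => [|y s IH] /=; first by right; case.
apply: (iffP orP) => [[py|/IH [x xs px]]|[x [<-|xs] px]].
- by exists y; [left|].
- by exists x; [right|].
- by left.
- by right; apply/IH; exists x.
Qed.

End InS.

Lemma sum_differ_at {A : finType} (h h' : A -> nat) a :
  (forall x, x != a -> h x = h' x) -> \sum_x h x + h' a = \sum_x h' x + h a.
Proof.
move=> same; rewrite (bigD1 a) // [in RHS](bigD1 a) //= (eq_bigr h') => [|x /same //].
lia.
Qed.

Lemma sum_upd {A : finType} {B : Type} (h : B -> nat) (g : A -> B) a b :
  \sum_x h (upd g a b x) + h (g a) = \sum_x h (g x) + h b.
Proof.
have := sum_differ_at (fun x => h (upd g a b x)) (fun x => h (g x)) a.
by rewrite /upd eqxx; apply=> x /negbTE ->.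
Qed.

Lemma upd_same {A : eqType} {B : Type} (g : A -> B) a b : upd g a b a = b.
Proof. by rewrite /upd eqxx. Qed.

Lemma upd_other {A : eqType} {B : Type} (g : A -> B) a b x : x != a -> upd g a b x = g x.
Proof. by rewrite /upd => /negbTE ->. Qed.

Section MdValue.
Local Set Implicit Arguments.
Local Unset Strict Implicit.

Variables (W : finType) (n f : nat) (T V C : Type) (Phi : 'I_n -> V -> C).

Local Notation MID := (MID W).
Local Notation msg := (msg W T V C).
Local Notation sstate := (sstate W n T V C).
Local Notation gstate := (gstate W n T V C).
Local Notation act := (act W n T V C).
Local Notation g_w := (g_w W n T V C).
Local Notation g_s := (g_s W n T V C).
Local Notation g_ch := (g_ch W n T V C).
Local Notation w_failed := (w_failed W n T V C).
Local Notation w_buff := (w_buff W n T V C).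
Local Notation w_mCount := (w_mCount W n T V C).
Local Notation s_failed := (s_failed W n T V C).
Local Notation s_status := (s_status W n T V C).
Local Notation s_content := (s_content W n T V C).
Local Notation s_outq := (s_outq W n T V C).
Local Notation SState := (SState W n T V C).
Local Notation full_server := (full_server n f).
Local Notation s_on_recv := (s_on_recv W n f T V C Phi).
Local Notation step := (step W n f T V C Phi).
Local Notation w_holds := (w_holds W n T V C Phi).
Local Notation s_holds := (s_holds W n T V C Phi).
Local Notation set_w := (set_w W n T V C).
Local Notation set_s := (set_s W n T V C).
Local Notation set_ch := (set_ch W n T V C).

Definition forward (s : 'I_n) (x : MID) (t : T) (v : V) : seq (msg * 'I_n) :=
  [seq ((x, Full T V C t v), s') | s' <- enum 'I_n &
                                   (val s < val s')%N && full_server s'] ++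
  [seq ((x, Coded T V C t (Phi s' v)), s') | s' <- enum 'I_n &
                                   ~~ full_server s' && (s' != s)].

Variant s_on_recv_spec (s : 'I_n) (m : msg) (ss : sstate) : sstate -> Prop :=
| RecvIgnored : s_on_recv_spec s m ss ss
| RecvFull x t v of m = (x, Full T V C t v) & s_failed ss = false & s_status ss x = None :
    s_on_recv_spec s m ss
      (SState false (upd (s_status ss) x (Some Sending))
         (upd (s_content ss) x (Some (t, Phi s v)))
         (upd (s_outq ss) x (s_outq ss x ++ forward s x t v)))
| RecvCoded x t c of m = (x, Coded T V C t c) & s_failed ss = false &
    s_status ss x <> Some Delivered :
    s_on_recv_spec s m ss
      (SState false (upd (s_status ss) x (Some Ready))
         (upd (s_content ss) x (Some (t, c))) (s_outq ss)).

Lemma s_on_recvP s m ss : s_on_recv_spec s m ss (s_on_recv s m ss).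
Proof.
rewrite /s_on_recv; case: ifP => [_|failed]; first exact: RecvIgnored.
case: m => x [t v|t c] /=; case E: (s_status ss x) => [[| |]|];
  by [apply: RecvIgnored | apply: RecvFull | apply: RecvCoded; rewrite // E].
Qed.

Definition well_addressed (y : msg * 'I_n) : bool :=
  if y.1.2 is Full _ _ then full_server y.2 else true.

Record server_invariant (ss : sstate) : Prop := ServerInvariant {
  outq_addressed : forall x y, InS y (s_outq ss x) -> well_addressed y /\ y.1.1 = x;
  content_pending : forall x, s_content ss x = None \/
    s_status ss x = Some Ready \/ s_outq ss x <> [::] }.

Record invariant (g : gstate) : Prop := Invariant {
  channel_addressed : forall src d m, InS m (g_ch g src d) -> well_addressed (m, d);
  buffer_addressed : forall q y, InS y (w_buff (g_w g q)) ->
    well_addressed y /\ y.1.1 = (q, w_mCount (g_w g q));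
  server_inv : forall s, server_invariant (g_s g s) }.

Lemma invariant_init : invariant (g_init W n T V C).
Proof. by split=> // s; split=> // x; left. Qed.

Hypothesis fS_lt_n : f.+1 < n.

Lemma forward_neq_nil s x t v : full_server s -> forward s x t v <> [::].
Proof.
move=> s_full; have last_lt : n.-1 < n by lia.
have hasP : has (fun s' => ~~ full_server s' && (s' != s)) (enum 'I_n).
  apply/hasP; exists (Ordinal last_lt); rewrite ?mem_enum //.
  apply/andP; split; first by rewrite /full_server /=; lia.
  by apply/negP => /eqP E; move: s_full; rewrite -E /full_server /=; lia.
move=> /(congr1 size); rewrite size_cat !size_map !size_filter /=.
by move: hasP; rewrite has_count; lia.
Qed.

Lemma forward_addressed s x t v y :
  InS y (forward s x t v) -> well_addressed y /\ y.1.1 = x.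
Proof.
by case/InS_cat=> /(@InS_map_filter (msg * 'I_n)) [s' Ps' <-] //; case/andP: Ps'.
Qed.

Lemma recv_server_invariant s m ss :
  well_addressed (m, s) -> server_invariant ss -> server_invariant (s_on_recv s m ss).
Proof.
move=> m_ok [outq_ok pending].
case: s_on_recvP => [|x t v Em _ _|x t c _ _ _]; first by split.
- split=> x'; rewrite /= /upd; case: eqP => [<-|_]; [|exact: outq_ok| |exact: pending].
    by move=> y /InS_cat [/outq_ok //|/forward_addressed].
  right; right; case: (s_outq ss x') => //.
  by apply: forward_neq_nil; rewrite Em in m_ok.
- split=> [|x']; first exact: outq_ok.
  by rewrite /= /upd; case: eqP => _; [right; left|exact: pending].
Qed.

Lemma ssend_server_invariant ss x y rest :
  s_outq ss x = y :: rest -> server_invariant ss ->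
  server_invariant (SState (s_failed ss)
    (if rest is [::] then upd (s_status ss) x (Some Ready) else s_status ss)
    (s_content ss) (upd (s_outq ss) x rest)).
Proof.
move=> outq_x [outq_ok pending]; split=> x'; rewrite /= /upd.
  case: eqP => [->|_]; last exact: outq_ok.
  by move=> z z_rest; apply: outq_ok; rewrite outq_x; right.
case: rest {outq_x} => [|z rest]; case: eqP => _;
  by [right; left | right; right | exact: pending].
Qed.

Lemma deliver_server_invariant ss x :
  server_invariant ss ->
  server_invariant (SState (s_failed ss) (upd (s_status ss) x (Some Delivered))
    (upd (s_content ss) x None) (s_outq ss)).
Proof.
case=> outq_ok pending; split=> //= x'.
by rewrite /upd; case: eqP => _; [left|exact: pending].
Qed.

Lemma invariant_step g a g' : step g a g' -> invariant g -> invariant g'.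
Proof.
case=> {g a g'} [g q t v|g q m d rest _ buff|g q t _ _ _ _|g q|g src dst m l1 l2 ch
  |g s x m d rest _ outq|g s x t c _ _ _|g s] [ch_ok buff_ok srv_ok]; split=> //=.
- move=> q' y; rewrite /upd; case: eqP => [->|_]; last exact: buff_ok.
  rewrite /w_on_send; case: ifP => _; first exact: buff_ok.
  by move/(@InS_map_filter (msg * 'I_n))=> [s' s'_full <-].
- move=> src' d' m'; case: ifP => [/andP [_ /eqP ->]|_]; last exact: ch_ok.
  case/InS_rcons=> [/ch_ok //|<-].
  by apply: (proj1 (buff_ok q (m, d) _)); rewrite buff; left.
- move=> q' y; rewrite /upd; case: eqP => [->|_] /=; last exact: buff_ok.
  by move=> y_rest; apply: buff_ok; rewrite buff; right.
- by move=> q' y; rewrite /upd; case: eqP => [->|_]; exact: buff_ok.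
- by move=> q' y; rewrite /upd; case: eqP => [->|_]; exact: buff_ok.
- move=> src' d' m'; case: ifP => [/andP [_ /eqP ->]|_]; last exact: ch_ok.
  by move: (ch_ok src dst m'); rewrite ch !InS_cat /=; tauto.
- move=> s'; rewrite /upd; case: eqP => [_|_]; last exact: srv_ok.
  apply: recv_server_invariant (srv_ok dst).
  by apply: (ch_ok src); rewrite ch InS_cat /=; tauto.
- move=> src' d' m'; case: ifP => [/andP [_ /eqP ->]|_]; last exact: ch_ok.
  case/InS_rcons=> [/ch_ok //|<-].
  by apply: (proj1 (@outq_addressed _ (srv_ok s) x (m, d) _)); rewrite outq; left.
- move=> s'; rewrite /upd; case: eqP => [_|_]; last exact: srv_ok.
  exact: ssend_server_invariant outq (srv_ok s).
- move=> s'; rewrite /upd; case: eqP => [_|_]; last exact: srv_ok.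
  exact: deliver_server_invariant (srv_ok s).
- move=> s'; rewrite /upd; case: eqP => [_|_]; last exact: srv_ok.
  by case: (srv_ok s) => ? ?; split.
Qed.

Lemma w_failed_step g a g' q : step g a g' -> w_failed (g_w g q) -> w_failed (g_w g' q).
Proof.
case=> {g a g'} [g q' t v|g q' m d rest _ _|g q' t _ _ _ _|g q'||||] //=;
  rewrite /upd; case: eqP => // -> //.
by rewrite /w_on_send; case: ifP.
Qed.

Lemma s_failed_step g a g' s : step g a g' -> s_failed (g_s g s) -> s_failed (g_s g' s).
Proof.
case=> {g a g'} [||||g src dst m l1 l2 _|g s' x m d rest _ _|g s' x t c _ _ _|g s'] //=;
  rewrite /upd; case: eqP => // -> //.
by move=> failed; rewrite /s_on_recv failed.
Qed.

Lemma w_mCount_step g a g' q : step g a g' -> w_mCount (g_w g q) <= w_mCount (g_w g' q).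
Proof.
case=> {g a g'} [g q' t v|g q' m d rest _ _|g q' t _ _ _ _|g q'||||] //=;
  rewrite /upd; case: eqP => // -> //.
by rewrite /w_on_send; case: ifP.
Qed.

Lemma mdsend_step g q t v g' : step g (A_mdsend W n T V C q t v) g' ->
  w_failed (g_w g' q) \/ w_mCount (g_w g' q) = (w_mCount (g_w g q)).+1.
Proof.
move=> st; inversion st; subst => /=.
by rewrite /upd eqxx /w_on_send; case: ifP => failed; [left|right].
Qed.

Section Potential.
Variable mid : MID.

Definition carries_mid (y : msg * 'I_n) : bool := y.1.1 == mid.

Definition weight_base : nat := (6 * n).+1.

Definition transit_weight (m : msg) (d : 'I_n) : nat :=
  if m.1 == mid then (if m.2 is Full _ _ then weight_base ^ (n - d) else 1) else 0.

(* Queued entries weigh 2 more than in transit, so that sending one decreases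
   the potential even when it sets the sender's status back to Ready. *)
Definition queued_weight (y : msg * 'I_n) : nat :=
  transit_weight y.1 y.2 + 2 * carries_mid y.

Definition status_weight (o : option status) : nat :=
  match o with Some Ready => 1 | Some Delivered => 0 | _ => 2 end.

Definition queue_potential (b : seq (msg * 'I_n)) : nat := sumn (map queued_weight b).

Definition channel_potential (d : 'I_n) (l : seq msg) : nat :=
  sumn [seq transit_weight m d | m <- l].

Definition server_potential (ss : sstate) : nat :=
  queue_potential (s_outq ss mid) + status_weight (s_status ss mid).

Definition potential (g : gstate) : nat :=
  \sum_q queue_potential (w_buff (g_w g q)) +
  \sum_(x : (W + 'I_n) * 'I_n) channel_potential x.2 (g_ch g x.1 x.2) +
  \sum_s server_potential (g_s g s).

Lemma carries_le_transit_weight m d : (m.1 == mid) <= transit_weight m d.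
Proof.
by rewrite /transit_weight; case: eqP => //= _; case: m.2 => // *; rewrite expn_gt0.
Qed.

Lemma queue_potential_has b : 2 * has carries_mid b <= queue_potential b.
Proof.
rewrite /queue_potential; elim: b => //= y b IH.
have : 2 * carries_mid y <= queued_weight y by rewrite /queued_weight leq_addl.
lia.
Qed.

Lemma queue_potential_eq0 b :
  (forall y, InS y b -> ~~ carries_mid y) -> queue_potential b = 0.
Proof.
move=> no_mid; apply: sumn_InS_eq0 => y /no_mid /negbTE.
by rewrite /queued_weight /transit_weight /carries_mid => ->.
Qed.

Lemma queue_potential_forward s t v :
  queue_potential (forward s mid t v) < weight_base ^ (n - s).
Proof.
set X := weight_base ^ (n - s.+1).
have X_gt0 : 0 < X by rewrite expn_gt0.
have -> : weight_base ^ (n - s) = weight_base * X.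
  by rewrite -expnS; congr (_ ^ _); have := ltn_ord s; lia.
rewrite /queue_potential /forward map_cat sumn_cat -!map_comp.
apply: (@leq_ltn_trans (n * (X + 2) + n * 3)); last by rewrite /weight_base; nia.
apply: leq_add; rewrite -[n in n * _]card_ord cardE; apply: sumn_filter_le.
  move=> s' /andP [lt_s _]; rewrite /= /queued_weight /transit_weight /carries_mid /= eqxx.
  by rewrite leq_add2r /X leq_pexp2l // leq_sub2l.
by move=> s' _; rewrite /= /queued_weight /transit_weight /carries_mid /= eqxx.
Qed.

Lemma potential_set_w g q ws :
  potential (set_w g q ws) + queue_potential (w_buff (g_w g q)) =
  potential g + queue_potential (w_buff ws).
Proof.
move: (sum_upd (fun ws => queue_potential (w_buff ws)) (g_w g) q ws).
rewrite /potential /=; lia.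
Qed.

Lemma potential_set_s g s ss :
  potential (set_s g s ss) + server_potential (g_s g s) =
  potential g + server_potential ss.
Proof.
by rewrite /potential /= -addnA sum_upd addnA.
Qed.

Lemma potential_set_ch g src d l :
  potential (set_ch g src d l) + channel_potential d (g_ch g src d) =
  potential g + channel_potential d l.
Proof.
have same (x : (W + 'I_n) * 'I_n) : x != (src, d) ->
    channel_potential x.2 (g_ch (set_ch g src d l) x.1 x.2) =
    channel_potential x.2 (g_ch g x.1 x.2).
  by case: x => a b; rewrite /= xpair_eqE => /negbTE ->.
move: (sum_differ_at _ _ _ same); rewrite /potential /= !eqxx /=; lia.
Qed.

Lemma queue_potential_cat b1 b2 :
  queue_potential (b1 ++ b2) = queue_potential b1 + queue_potential b2.
Proof. by rewrite /queue_potential map_cat sumn_cat. Qed.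

Lemma server_potential_recv s m ss :
  server_potential (s_on_recv s m ss) + (m.1 == mid) <=
  server_potential ss + transit_weight m s.
Proof.
case: s_on_recvP => [|x t v -> _ fresh|x t c -> _ live].
  by rewrite leq_add2l carries_le_transit_weight.
- rewrite /server_potential /transit_weight /=; have [Ex|nx] := eqVneq x mid.
    subst x; rewrite !upd_same queue_potential_cat fresh /=.
    by have := queue_potential_forward s t v; lia.
  by rewrite !upd_other 1?eq_sym // addn0.
- rewrite /server_potential /transit_weight /=; have [Ex|nx] := eqVneq x mid.
    subst x; rewrite upd_same; case: (s_status ss mid) live => [[| |]|] //= _; lia.
  by rewrite upd_other 1?eq_sym // addn0.
Qed.

Lemma server_potential_ssend ss x m d rest :
  s_outq ss x = (m, d) :: rest -> m.1 = x ->
  server_potential (SState (s_failed ss)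
    (if rest is [::] then upd (s_status ss) x (Some Ready) else s_status ss)
    (s_content ss) (upd (s_outq ss) x rest)) + transit_weight m d + (x == mid)
  <= server_potential ss.
Proof.
rewrite /server_potential /= => outq_x m_x; have [Ex|nx] := eqVneq x mid.
  rewrite Ex in outq_x m_x *.
  rewrite upd_same outq_x /queue_potential /= /queued_weight /carries_mid m_x eqxx.
  case: rest {outq_x} => [|y rest]; rewrite ?upd_same;
    by case: (s_status ss mid) => [[| |]|] /=; lia.
rewrite upd_other 1?eq_sym // /transit_weight m_x (negbTE nx) addn0.
by case: rest {outq_x} => [|y rest]; rewrite ?upd_other 1?eq_sym // addn0.
Qed.

Lemma server_potential_deliver ss x : s_status ss x = Some Ready ->
  server_potential (SState (s_failed ss) (upd (s_status ss) x (Some Delivered))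
    (upd (s_content ss) x None) (s_outq ss)) + (x == mid) <= server_potential ss.
Proof.
rewrite /server_potential /= => ready; have [Ex|nx] := eqVneq x mid.
  by rewrite Ex in ready *; rewrite upd_same ready /=; lia.
by rewrite upd_other 1?eq_sym // addn0.
Qed.

Definition touches_mid (g : gstate) (a : act) : bool :=
  match a with
  | A_mdsend q _ _ => ~~ w_failed (g_w g q) && has carries_mid (w_buff (g_w g q))
  | A_wsend q => if w_buff (g_w g q) is y :: _ then carries_mid y else false
  | A_recv _ _ m => m.1 == mid
  | A_ssend _ x | A_deliver _ x _ _ => x == mid
  | _ => false
  end.

Definition mid_not_next (g : gstate) : Prop :=
  forall q, w_failed (g_w g q) = false -> (q, (w_mCount (g_w g q)).+1) != mid.

Lemma potential_step g a g' : step g a g' -> invariant g -> mid_not_next g ->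
  potential g' + touches_mid g a <= potential g.
Proof.
case=> {g a g'} [g q t v|g q m d rest _ buff|g q t _ _ _ _|g q|g src dst m l1 l2 ch
  |g s x m d rest _ outq|g s x t c _ ready _|g s] inv_g not_next /=.
- set ws := (X in set_w _ _ X); have := potential_set_w g q ws.
  rewrite /ws /w_on_send; case: ifP => [_ /=|live]; first lia.
  rewrite /= [queue_potential (map _ _)]queue_potential_eq0; last first.
    by move=> y /(@InS_map_filter (msg * 'I_n)) [s' _ <-]; exact: not_next.
  by have := queue_potential_has (w_buff (g_w g q)); lia.
- set ws := (X in set_w _ _ X); have := potential_set_w g q ws.
  have := potential_set_ch (set_w g q ws) (inl q) d (rcons (g_ch g (inl q) d) m).
  rewrite /ws /= buff /channel_potential map_rcons sumn_rcons.
  by rewrite /queue_potential /= /queued_weight /=; lia.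
- by set ws := (X in set_w _ _ X); have := potential_set_w g q ws; rewrite /ws /=; lia.
- by set ws := (X in set_w _ _ X); have := potential_set_w g q ws; rewrite /ws /=; lia.
- have := potential_set_s (set_ch g src dst (l1 ++ l2)) dst (s_on_recv dst m (g_s g dst)).
  have := potential_set_ch g src dst (l1 ++ l2).
  have := server_potential_recv dst m (g_s g dst).
  rewrite /= ch /channel_potential !map_cat !sumn_cat /=; lia.
- set ss' := (X in set_s _ _ X); have := potential_set_s g s ss'.
  have := potential_set_ch (set_s g s ss') (inr s) d (rcons (g_ch g (inr s) d) m).
  have m_x : m.1 = x.
    apply: (proj2 (@outq_addressed _ (server_inv inv_g s) x (m, d) _)).
    by rewrite outq; left.
  have := server_potential_ssend outq m_x.
  rewrite /ss' /= /channel_potential map_rcons sumn_rcons; lia.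
- set ss' := (X in set_s _ _ X); have := potential_set_s g s ss'.
  by have := server_potential_deliver ready; rewrite /ss'; lia.
- set ss' := (X in set_s _ _ X); have := potential_set_s g s ss'.
  by rewrite /ss' /server_potential /=; lia.
Qed.

Definition server_view (ss : sstate) :=
  (s_status ss mid, s_content ss mid, s_outq ss mid).

Lemma server_view_step g a g' s : step g a g' -> ~~ touches_mid g a ->
  server_view (g_s g' s) = server_view (g_s g s).
Proof.
case=> {g a g'} [||||g src s' m l1 l2 _|g s' x m d rest _ _|g s' x t c _ _ _|g s'] //= irr;
  (have [<-|ne] := eqVneq s s'; last by rewrite upd_other); rewrite upd_same.
- case: s_on_recvP => // [x t v Em _ _|x t c Em _ _]; rewrite Em /= in irr;
    by rewrite /server_view /= !upd_other // eq_sym.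
- by case: rest => [|? ?]; rewrite /server_view /= !upd_other // eq_sym.
- by rewrite /server_view /= !upd_other // eq_sym.
- by [].
Qed.

Lemma wsend_touches_mid g q : invariant g -> has carries_mid (w_buff (g_w g q)) ->
  touches_mid g (A_wsend W n T V C q).
Proof.
move=> inv_g /InS_hasP [y y_in y_mid] /=.
case buff: (w_buff (g_w g q)) => [|z rest]; first by rewrite buff in y_in.
have z_in : InS z (w_buff (g_w g q)) by rewrite buff; left.
have [_ z_id] := buffer_addressed inv_g z_in; have [_ y_id] := buffer_addressed inv_g y_in.
by move: y_mid; rewrite /carries_mid z_id y_id.
Qed.

Lemma buffer_step_frozen g a g' q : step g a g' -> invariant g -> ~~ touches_mid g a ->
  has carries_mid (w_buff (g_w g q)) -> w_buff (g_w g' q) = w_buff (g_w g q).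
Proof.
case=> {g a g'} [g q' t v|g q' m d rest _ buff|g q' t _ _ _ _|g q'||||] //= inv_g irr has_mid;
  (have [Eq|ne] := eqVneq q q'; [subst q'; rewrite upd_same //|by rewrite upd_other]).
- by move: irr; rewrite has_mid andbT negbK /w_on_send => ->.
- by move: irr; have := wsend_touches_mid inv_g has_mid; rewrite /= buff => ->.
Qed.

Lemma buffer_step_clean g a g' q : step g a g' -> mid_not_next g ->
  ~~ has carries_mid (w_buff (g_w g q)) -> ~~ has carries_mid (w_buff (g_w g' q)).
Proof.
case=> {g a g'} [g q' t v|g q' m d rest _ buff|g q' t _ _ _ _|g q'||||] //= not_next clean;
  (have [Eq|ne] := eqVneq q q'; [subst q'; rewrite upd_same //|by rewrite upd_other]).
- rewrite /w_on_send; case: ifP => // live.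
  by rewrite has_map; apply/hasPn => s' _; exact: not_next.
- by move: clean; rewrite buff /= negb_or => /andP [].
Qed.

End Potential.

Section Execution.
Variable e : execution W n T V C.
Hypothesis e_exec : is_execution W n f T V C Phi e.
Local Notation st l := (ex_st W n T V C e l).
Local Notation ac l := (ex_act W n T V C e l).

Lemma execution_step l a : ac l = Some a -> step (st l) a (st l.+1).
Proof. by move=> Ea; have := proj2 e_exec l; rewrite Ea. Qed.

Lemma execution_preserves (P : gstate -> Prop) i :
  (forall l a, i <= l -> ac l = Some a -> step (st l) a (st l.+1) ->
     P (st l) -> P (st l.+1)) ->
  P (st i) -> forall l, i <= l -> P (st l).
Proof.
move=> Pstep Pi; apply: (nat_ind_from (fun l => P (st l))) => // l il Pl.
have := proj2 e_exec l; case Ea: (ac l) => [a|] stl; last by rewrite stl.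
exact: Pstep Ea stl Pl.
Qed.

Lemma invariant_execution l : invariant (st l).
Proof.
apply: (execution_preserves (P := invariant) (i := 0)) => //.
  by move=> k a _ _ /invariant_step.
by rewrite (proj1 e_exec); exact: invariant_init.
Qed.

Lemma w_failed_persists q l l' :
  l <= l' -> w_failed (g_w (st l) q) -> w_failed (g_w (st l') q).
Proof.
move=> ll' failed.
apply: (execution_preserves (P := fun g => w_failed (g_w g q)) (i := l)) => //.
by move=> k a _ _ /w_failed_step; apply.
Qed.

Lemma s_failed_persists s l l' :
  l <= l' -> s_failed (g_s (st l) s) -> s_failed (g_s (st l') s).
Proof.
move=> ll' failed.
apply: (execution_preserves (P := fun g => s_failed (g_s g s)) (i := l)) => //.
by move=> k a _ _ /s_failed_step; apply.
Qed.

Definition settles (crashed : gstate -> bool) (holds : gstate -> Prop) (j : nat) : Prop :=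
  crashed (st j) \/ forall l, j <= l -> ~ holds (st l).

Lemma settles_eventually (crashed : gstate -> bool) (holds : gstate -> Prop) j :
  (forall l l', l <= l' -> crashed (st l) -> crashed (st l')) ->
  settles crashed holds j -> eventually (settles crashed holds).
Proof.
move=> persists settled; exists j => j' jj'; case: settled => [crashed_j|clean].
  by left; exact: persists crashed_j.
by right=> l j'l; apply: clean; exact: leq_trans jj' j'l.
Qed.

Section Quiescence.
Hypothesis fair_e : fair W n T V C e.
Variables (i0 : nat) (p : W) (t : T) (v : V).
Hypothesis send_i0 : ac i0 = Some (A_mdsend W n T V C p t v).
Local Notation mid := (p, (w_mCount (g_w (st i0) p)).+1).

Lemma sender_advanced l :
  i0 < l -> w_failed (g_w (st l) p) \/ mid.2 <= w_mCount (g_w (st l) p).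
Proof.
apply: (execution_preserves
  (P := fun g => w_failed (g_w g p) \/ mid.2 <= w_mCount (g_w g p))).
  move=> k a _ _ stk [failed|le]; first by left; exact: w_failed_step stk failed.
  by right; exact: leq_trans le (w_mCount_step p stk).
by case: (mdsend_step (execution_step send_i0)) => [failed|->]; [left|right].
Qed.

Lemma mid_not_next_after l : i0 < l -> mid_not_next mid (st l).
Proof.
move=> i0l q live; apply/negP => /eqP [Eq cnt]; subst q.
case: (sender_advanced i0l) => [failed|]; first by rewrite failed in live.
by rewrite /= -cnt ltnn.
Qed.

Lemma potential_settles :
  exists2 J, i0 < J & forall l a, J <= l -> ac l = Some a -> ~~ touches_mid mid (st l) a.
Proof.
have step_le l a : i0 < l -> ac l = Some a ->
    potential mid (st l.+1) + touches_mid mid (st l) a <= potential mid (st l).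
  move=> i0l Ea; apply: potential_step (execution_step Ea) (invariant_execution l) _.
  exact: mid_not_next_after.
have nonincreasing l : i0 < l -> potential mid (st l.+1) <= potential mid (st l).
  move=> i0l; have := proj2 e_exec l; case Ea: (ac l) => [a|] stl; last by rewrite stl.
  by have := step_le l a i0l Ea; lia.
have [J i0J constJ] := nonincreasing_eventually_constant _ _ nonincreasing.
exists J => // l a Jl Ea; have := step_le l a (leq_trans i0J Jl) Ea.
by rewrite constJ ?(leq_trans Jl) // constJ //; lia.
Qed.

Section Quiet.
Variable J : nat.
Hypothesis i0_J : i0 < J.
Hypothesis quiet : forall l a, J <= l -> ac l = Some a -> ~~ touches_mid mid (st l) a.

Lemma sender_settles :
  eventually (settles (fun g => w_failed (g_w g p)) (fun g => w_holds mid v (g_w g p))).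
Proof.
suff [j settled] : exists j,
    settles (fun g => w_failed (g_w g p)) (fun g => w_holds mid v (g_w g p)) j.
  exact: settles_eventually (w_failed_persists (q := p)) settled.
case: (boolP (has (carries_mid mid) (w_buff (g_w (st J) p)))) => [has_mid|clean].
- have frozen l : J <= l -> w_buff (g_w (st l) p) = w_buff (g_w (st J) p).
    apply: (execution_preserves
      (P := fun g => w_buff (g_w g p) = w_buff (g_w (st J) p))) => //.
    move=> k a Jk Ea stk E; rewrite -E.
    by apply: buffer_step_frozen stk (invariant_execution k) (quiet Jk Ea) _; rewrite E.
  have [j [Jj [disabled|wsend]]] := fair_e.1 p J.
    case failed: (w_failed (g_w (st j) p)); first by exists j; left.
    by exfalso; apply: disabled; rewrite frozen //; split=> //; case: (w_buff _) has_mid.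
  have := quiet Jj wsend; rewrite wsend_touches_mid //; first exact: invariant_execution.
  by rewrite frozen.
- have clean_from l : J <= l -> ~~ has (carries_mid mid) (w_buff (g_w (st l) p)).
    apply: (execution_preserves
      (P := fun g => ~~ has (carries_mid mid) (w_buff (g_w g p)))) => //.
    move=> k a Jk _ stk; apply: buffer_step_clean stk _.
    exact: mid_not_next_after (leq_trans i0_J Jk).
  exists J; right=> l Jl [m [d [md_in [m_mid _]]]].
  move/negP: (clean_from l Jl); apply; apply/InS_hasP; exists (m, d) => //.
  by rewrite /carries_mid m_mid.
Qed.

Lemma server_settles s :
  eventually (settles (fun g => s_failed (g_s g s)) (fun g => s_holds mid v (g_s g s))).
Proof.
suff [j settled] : exists j,
    settles (fun g => s_failed (g_s g s)) (fun g => s_holds mid v (g_s g s)) j.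
  exact: settles_eventually (s_failed_persists (s := s)) settled.
have frozen l : J <= l -> server_view mid (g_s (st l) s) = server_view mid (g_s (st J) s).
  apply: (execution_preserves
    (P := fun g => server_view mid (g_s g s) = server_view mid (g_s (st J) s))) => //.
  by move=> k a Jk Ea stk <-; exact: server_view_step stk (quiet Jk Ea).
case outq_J: (s_outq (g_s (st J) s) mid) => [|y ys]; last first.
  have [j [Jj [disabled|ssend]]] := fair_e.2.2.1 s mid J.
    case failed: (s_failed (g_s (st j) s)); first by exists j; left.
    by exfalso; apply: disabled; move: (frozen j Jj) => -[_ _ ->]; rewrite outq_J.
  by move: (quiet Jj ssend); rewrite /= eqxx.
case content_J: (s_content (g_s (st J) s) mid) => [tc|]; last first.
  exists J; right=> l Jl; move: (frozen l Jl) => -[_ content_l outq_l].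
  case=> [[t' [c' [E _]]]|[m [d [E _]]]]; move: E.
    by rewrite content_l content_J.
  by rewrite outq_l outq_J.
have ready : s_status (g_s (st J) s) mid = Some Ready.
  have := content_pending (server_inv (invariant_execution J) s) mid.
  by rewrite content_J outq_J => -[|[]].
have [j [Jj [disabled|[t' [c' deliver]]]]] := fair_e.2.2.2 s mid J.
  case failed: (s_failed (g_s (st j) s)); first by exists j; left.
  by exfalso; apply: disabled; move: (frozen j Jj) => -[-> -> _]; rewrite ready content_J.
by move: (quiet Jj deliver); rewrite /= eqxx.
Qed.

End Quiet.

End Quiescence.

End Execution.
End MdValue.

Theorem theorem2 (W : finType) (n f k : nat) (dT : Order.disp_t)
    (T : orderType dT) (V C : Type) (Phi : 'I_n -> V -> C)
    (e : execution W n T V C)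
    (i0 : nat) (p : W) (t : T) (v : V) :
  (1 <= f)%N -> (f.*2 + 1 <= n)%N ->
  mds n V C Phi k ->
  is_execution W n f T V C Phi e ->
  fair W n T V C e -> reliable_channels W n T V C e ->
  crash_bound W n f T V C e -> well_formed W n T V C e ->
  ex_act W n T V C e i0 = Some (A_mdsend W n T V C p t v) ->
  let id := (p, (w_mCount W n T V C (g_w W n T V C (ex_st W n T V C e i0) p)).+1) in
  exists j, (i0 < j)%N /\
    (w_failed W n T V C (g_w W n T V C (ex_st W n T V C e j) p) = true \/
       forall l, (j <= l)%N ->
         ~ w_holds W n T V C Phi id v (g_w W n T V C (ex_st W n T V C e l) p)) /\
    (forall s : 'I_n,
       s_failed W n T V C (g_s W n T V C (ex_st W n T V C e j) s) = true \/
       forall l, (j <= l)%N ->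
         ~ s_holds W n T V C Phi id v (g_s W n T V C (ex_st W n T V C e l) s)).
Proof.
move=> f_ge1 n_ge _ e_exec fair_e _ _ _ send_i0 id.
have fS_lt_n : f.+1 < n by lia.
have [J i0_J quiet] := potential_settles fS_lt_n e_exec send_i0.
have sender := sender_settles fS_lt_n e_exec fair_e send_i0 i0_J quiet.
have servers := server_settles fS_lt_n e_exec fair_e v quiet.
have [j settled] :=
  eventually_and (eventually_and (eventually_gt i0) sender) (eventually_forall_fin servers).
have [[i0_j sender_j] servers_j] := settled j (leqnn j).
by exists j; split; [|split].
Qed.
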